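(* Let $\mathcal{S}$ be a finite set, $\Pi$ an irreducible stochastic matrix on $\mathcal{S}$, $\kappa(x,y):=\pi_{xy}-\mathbf{1}_{x=y}$, $\mathcal{K}=\Pi-\mathrm{I}$, and $Q=(q(y))$ the unique invariant distribution of $\Pi$. Assume detailed balance: $q(y)\kappa(y,z)=q(z)\kappa(z,y)$ for all $y,z$. Let $(P(t))_{t\ge0}$, $P(t)=(p(t,y))_{y\in\mathcal{S}}$, be the curve of time-marginal laws of the continuous-time Markov chain with generator $\mathcal{K}$ started from an initial distribution $P(0)$ with all entries positive (equivalently $\partial_t p(t,y)=\sum_z p(t,z)\kappa(z,y)$). Then, for every $t_0\in(0,\infty)$, the curve $(P(t))_{t\ge t_0}$ is of steepest descent locally at $t=t_0$ for the variance functional $V(P\,|\,Q):=\sum_y q(y)\big(p(y)/q(y)\big)^2-1$, relative to the metric $$\varrho(P_1,P_2):=\big\|\boldsymbol{\ell}_1-\boldsymbol{\ell}_2\big\|_{\mathbb{H}^{-1}(\mathcal{S},Q)},\qquad P_i=\boldsymbol{\ell}_iQ .$$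
   Context: $\mathcal{M}$ denotes the set of probability vectors on $\mathcal{S}$ with strictly positive entries; for $P\in\mathcal{M}$, $P=\boldsymbol{\ell}Q$ means $\ell(y)=p(y)/q(y)$. A smooth curve $(P(t))_{t_0\le t<\infty}\subset\mathcal{M}$ is of steepest descent locally at $t_0$ for a smooth functional $F:\mathcal{M}\to\mathbb{R}$ relative to a metric $\varrho$ on $\mathcal{M}$ if it minimizes, among all smooth curves $(\widetilde P(t))_{t_0\le t<\infty}\subset\mathcal{M}$ with $\widetilde P(t_0)=P(t_0)$, the quantity $\lim_{h\downarrow0}\big(F(\widetilde P(t_0+h))-F(P(t_0))\big)/\varrho(\widetilde P(t_0+h),P(t_0))$. Notation: $\nabla f(x,y):=f(y)-f(x)$; $\mathcal{Z}:=\{(x,y):\kappa(x,y)>0\}$, $c(x,y):=\frac12\kappa(x,y)q(x)$, $\|F\|^2_{\mathbb{L}^2(\mathcal{Z},C)}:=\sum_{(x,y)\in\mathcal{Z}}c(x,y)F(x,y)^2$; $\|f\|_{\mathbb{H}^{-1}(\mathcal{S},Q)}:=\|\nabla g\|_{\mathbb{L}^2(\mathcal{Z},C)}$ for any $g$ with $\mathcal{K}g=f$ if $f$ is in the range of $\mathcal{K}$, and $:=+\infty$ otherwise. *)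

From HB Require Import structures.
From mathcomp Require Import all_boot all_order all_algebra.
From mathcomp Require Import all_classical all_reals all_analysis.
Set Implicit Arguments. Unset Strict Implicit. Unset Printing Implicit Defensive.
Import Order.TTheory GRing.Theory Num.Theory.
Import numFieldNormedType.Exports.
Local Open Scope classical_set_scope.
Local Open Scope ring_scope.

Section Defs.
Variables (R : realType) (S : finType).

Fixpoint mpow (Pi : S -> S -> R) (n : nat) : S -> S -> R :=
  match n with
  | 0 => fun x y => (x == y)%:R
  | n.+1 => fun x y => \sum_z mpow Pi n x z * Pi z y
  end.

Definition stochastic (Pi : S -> S -> R) : Prop :=
  (forall x y, 0 <= Pi x y) /\ (forall x, \sum_y Pi x y = 1).

Definition irreducible (Pi : S -> S -> R) : Prop :=
  forall x y, exists n, 0 < mpow Pi n x y.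

Definition kappa (Pi : S -> S -> R) (x y : S) : R := Pi x y - (x == y)%:R.

Definition Kop (Pi : S -> S -> R) (g : S -> R) : S -> R :=
  fun x => \sum_y kappa Pi x y * g y.

Definition inM (P : S -> R) : Prop := (forall y, 0 < P y) /\ \sum_y P y = 1.

Definition grad (f : S -> R) (x y : S) : R := f y - f x.

Definition cw (Pi : S -> S -> R) (q : S -> R) (x y : S) : R :=
  2^-1 * kappa Pi x y * q x.

Definition L2norm (Pi : S -> S -> R) (q : S -> R) (F : S -> S -> R) : R :=
  Num.sqrt (\sum_x \sum_(y | 0 < kappa Pi x y) cw Pi q x y * F x y ^+ 2).

Definition Hm1norm (Pi : S -> S -> R) (q : S -> R) (f : S -> R) : \bar R :=
  match pselect (exists g, Kop Pi g = f) with
  | left H => (L2norm Pi q (grad (projT1 (cid H))))%:E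
  | right _ => +oo%E
  end.

Definition rho (Pi : S -> S -> R) (q : S -> R) (P1 P2 : S -> R) : \bar R :=
  Hm1norm Pi q (fun y => P1 y / q y - P2 y / q y).

Definition Var (q : S -> R) (P : S -> R) : R :=
  \sum_y q y * (P y / q y) ^+ 2 - 1.

Definition smooth_curve (t0 : R) (P : R -> S -> R) : Prop :=
  exists2 e : R, 0 < e &
    forall (y : S) (n : nat) (t : R), t0 - e < t ->
      derivable (iter n (@derive1 R R) (fun s => P s y)) t 1.

Definition curve_in_M (t0 : R) (P : R -> S -> R) : Prop :=
  forall t, t0 <= t -> inM (P t).

(* difference quotient (F(P(t0+h)) - F(P(t0))) / rho(P(t0+h), P(t0)), as an
   extended real (rho is finite on M x M; fine is used to divide) *)
Definition dquot (F : (S -> R) -> R) (rh : (S -> R) -> (S -> R) -> \bar R)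
    (t0 : R) (P : R -> S -> R) (h : R) : \bar R :=
  ((F (P (t0 + h)) - F (P t0)) / fine (rh (P (t0 + h)) (P t0)))%:E.

Definition steepest_descent (F : (S -> R) -> R)
    (rh : (S -> R) -> (S -> R) -> \bar R) (t0 : R) (P : R -> S -> R) : Prop :=
  curve_in_M t0 P /\ smooth_curve t0 P /\
  exists l : \bar R,
    dquot F rh t0 P h @[h --> 0^'+] --> l /\
    forall Pt : R -> S -> R,
      curve_in_M t0 Pt -> smooth_curve t0 Pt -> Pt t0 = P t0 ->
      forall lt : \bar R, dquot F rh t0 Pt h @[h --> 0^'+] --> lt ->
        (l <= lt)%E.

End Defs.

From HB Require Import structures.
From mathcomp Require Import all_boot all_order all_algebra.
From mathcomp Require Import all_classical all_reals all_analysis.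
From mathcomp Require Import ring lra.
Import Order.TTheory GRing.Theory Num.Theory.
Import numFieldNormedType.Exports.
Local Open Scope classical_set_scope.
Local Open Scope ring_scope.
Set Implicit Arguments. Unset Strict Implicit. Unset Printing Implicit Defensive.

(* Write P = l Q.  Detailed balance makes K self-adjoint in L^2(Q), and summation
   by parts gives sum_x q(x) phi(x) (K g)(x) = - E(grad phi, grad g), where E is
   the Dirichlet form whose square root is the L^2(Z, C) norm.  Hence if
   K g = l_1 - l_0, then V(P_1) - V(P_0) = -2 E(grad l_0, grad g) + ||l_1 - l_0||^2_Q
   >= -2 ||grad l_0|| rho(P_1, P_0) by Cauchy-Schwarz, so the difference quotients
   of every curve through P(t_0) are at least -2 ||grad l(t_0)||.  Along the
   Markov curve l' = K l, so g_h := int_{t_0}^{t_0 + h} l solves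
   K g_h = l(t_0 + h) - l(t_0) and g_h / h -> l(t_0): the first term of the
   quotient tends to -2 ||grad l(t_0)|| and the second one is bounded by
   ||grad (l(t_0 + h) - l(t_0))|| -> 0.  That the curve stays in M follows from
   Gronwall's inequality for sum_y min(p_y, 0)^2 and from sum_y kappa(x, y) = 0. *)

Lemma quadratic_ge0_disc (R : realFieldType) (A B C : R) :
  (forall t, 0 <= A + 2 * t * C + t ^+ 2 * B) -> 0 <= B -> C ^+ 2 <= A * B.
Proof.
move=> H; rewrite le_eqVlt => /predU1P[B0|Bp].
  have [C0|Cn0] := eqVneq C 0; first by rewrite C0 -B0 expr0n mulr0.
  have := H (- (A + 1) / (2 * C)).
  have -> : A + 2 * (- (A + 1) / (2 * C)) * C + (- (A + 1) / (2 * C)) ^+ 2 * B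
      = -1 by rewrite -B0; field.
  by rewrite ler0N1.
have := H (- C / B).
have -> : A + 2 * (- C / B) * C + (- C / B) ^+ 2 * B = (A * B - C ^+ 2) / B.
  by field; rewrite gt_eqF.
by rewrite pmulr_lge0 ?invr_gt0 // subr_ge0.
Qed.

Section DirichletForm.
Variables (R : realType) (S : finType) (Pi : S -> S -> R) (q : S -> R).

Definition dirichlet (F G : S -> S -> R) : R :=
  \sum_x \sum_(y | 0 < kappa Pi x y) cw Pi q x y * F x y * G x y.

Lemma L2norm_dirichlet F : L2norm Pi q F = Num.sqrt (dirichlet F F).
Proof.
congr Num.sqrt; apply: eq_bigr => x _; apply: eq_bigr => y _.
by rewrite expr2 mulrA.
Qed.

Lemma dirichletC F G : dirichlet F G = dirichlet G F.
Proof. by apply: eq_bigr => x _; apply: eq_bigr => y _; rewrite mulrAC. Qed.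

Lemma dirichletZl c F G :
  dirichlet (fun x y => c * F x y) G = c * dirichlet F G.
Proof.
rewrite /dirichlet mulr_sumr; apply: eq_bigr => x _; rewrite mulr_sumr.
by apply: eq_bigr => y _; ring.
Qed.

Lemma dirichletZr c F G :
  dirichlet F (fun x y => c * G x y) = c * dirichlet F G.
Proof. by rewrite dirichletC dirichletZl dirichletC. Qed.

Lemma dirichlet_cvg (T : Type) (F : set_system T) (FF : Filter F)
    (Ft Gt : T -> S -> S -> R) (F0 G0 : S -> S -> R) :
  (forall x y, Ft t x y @[t --> F] --> F0 x y) ->
  (forall x y, Gt t x y @[t --> F] --> G0 x y) ->
  dirichlet (Ft t) (Gt t) @[t --> F] --> dirichlet F0 G0.
Proof.
move=> FtF0 GtG0; apply: cvg_big => [|x _]; first exact: add_continuous.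
apply: cvg_big => [|y _]; first exact: add_continuous.
by apply: cvgM => //; apply: cvgM => //; exact: cvg_cst.
Qed.

Hypothesis q_ge0 : forall y, 0 <= q y.

Lemma dirichlet_ge0 F : 0 <= dirichlet F F.
Proof.
apply: sumr_ge0 => x _; apply: sumr_ge0 => y /ltW k_ge0.
by rewrite -mulrA -expr2 mulr_ge0 ?sqr_ge0 // !mulr_ge0.
Qed.

Lemma dirichlet_CauchySchwarz F G :
  `|dirichlet F G| <= Num.sqrt (dirichlet F F) * Num.sqrt (dirichlet G G).
Proof.
rewrite -sqrtr_sqr -sqrtrM ?dirichlet_ge0 //; apply: ler_wsqrtr.
apply: quadratic_ge0_disc (dirichlet_ge0 G) => t.
have -> : dirichlet F F + 2 * t * dirichlet F G + t ^+ 2 * dirichlet G G =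
    dirichlet (fun x y => F x y + t * G x y) (fun x y => F x y + t * G x y).
  rewrite /dirichlet !mulr_sumr -!big_split; apply: eq_bigr => x _.
  by rewrite !mulr_sumr -!big_split; apply: eq_bigr => y _ /=; ring.
exact: dirichlet_ge0.
Qed.

Lemma dirichlet0l G : dirichlet (fun _ _ => 0) G = 0.
Proof.
by rewrite /dirichlet big1 // => x _; rewrite big1 // => y _; rewrite mulr0 mul0r.
Qed.

Lemma dirichlet_ratio_le F G :
  `|dirichlet F G / Num.sqrt (dirichlet G G)| <= Num.sqrt (dirichlet F F).
Proof.
have [->|G_neq0] := eqVneq (Num.sqrt (dirichlet G G)) 0.
  by rewrite invr0 mulr0 normr0 sqrtr_ge0.
have G_gt0 : 0 < Num.sqrt (dirichlet G G) by rewrite lt0r G_neq0 sqrtr_ge0.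
rewrite normrM normfV [`|Num.sqrt _|]gtr0_norm // ler_pdivrMr //.
exact: dirichlet_CauchySchwarz.
Qed.

Lemma dirichlet_ratio_cvg (T : Type) (F : set_system T) (FF : Filter F)
    (Gt : T -> S -> S -> R) (G0 : S -> S -> R) :
  (forall x y, Gt t x y @[t --> F] --> G0 x y) ->
  dirichlet G0 (Gt t) / Num.sqrt (dirichlet (Gt t) (Gt t)) @[t --> F] -->
  Num.sqrt (dirichlet G0 G0).
Proof.
move=> GtG0; have [D0|D0_neq0] := eqVneq (dirichlet G0 G0) 0.
  have num0 t : dirichlet G0 (Gt t) = 0.
    apply/eqP; rewrite -normr_le0; apply: le_trans (dirichlet_CauchySchwarz _ _) _.
    by rewrite D0 sqrtr0 mul0r.
  by rewrite D0 sqrtr0; under eq_fun do rewrite num0 mul0r; exact: cvg_cst.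
have sqrtD0_gt0 : 0 < Num.sqrt (dirichlet G0 G0).
  by rewrite sqrtr_gt0 lt0r D0_neq0 dirichlet_ge0.
have -> : Num.sqrt (dirichlet G0 G0) =
    dirichlet G0 G0 / Num.sqrt (dirichlet G0 G0).
  by rewrite -{2}[dirichlet G0 G0]sqr_sqrtr ?dirichlet_ge0 // expr2 mulfK ?gt_eqF.
apply: cvgM; first exact: dirichlet_cvg (fun x y => cvg_cst _) GtG0.
apply: cvgV (lt0r_neq0 sqrtD0_gt0) _.
exact: continuous_cvg (@sqrt_continuous R _) (dirichlet_cvg _ GtG0 GtG0).
Qed.

End DirichletForm.

Section DetailedBalance.
Variables (R : realType) (S : finType) (Pi : S -> S -> R) (q : S -> R).
Hypothesis Pi_stochastic : stochastic Pi.
Hypothesis detailed_balance : forall y z, q y * kappa Pi y z = q z * kappa Pi z y.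

Lemma kappa_row_sum x : \sum_y kappa Pi x y = 0.
Proof.
rewrite /kappa sumrB (proj2 Pi_stochastic) (bigD1 x) //= eqxx big1 ?addr0 ?subrr //.
by move=> y; rewrite eq_sym => /negbTE ->.
Qed.

Lemma KopB f g x : Kop Pi (fun y => f y - g y) x = Kop Pi f x - Kop Pi g x.
Proof. by rewrite /Kop -sumrB; apply: eq_bigr => y _; rewrite mulrBr. Qed.

Lemma Kop_centered g x : Kop Pi g x = \sum_y kappa Pi x y * (g y - g x).
Proof.
rewrite [RHS](eq_bigr (fun y => kappa Pi x y * g y - kappa Pi x y * g x)).
  by rewrite sumrB -mulr_suml kappa_row_sum mul0r subr0.
by move=> y _; rewrite mulrBr.
Qed.

Lemma dirichlet_full F G : (forall x, F x x = 0) ->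
  dirichlet Pi q F G = \sum_x \sum_y cw Pi q x y * F x y * G x y.
Proof.
move=> F_diag0; apply: eq_bigr => x _.
rewrite [RHS](bigID (fun y => 0 < kappa Pi x y)) /= [X in _ = _ + X]big1 ?addr0 //.
move=> y k_le0; have [<-|xy] := eqVneq x y; first by rewrite F_diag0 mulr0 mul0r.
rewrite /cw; have -> : kappa Pi x y = 0.
  apply/eqP; rewrite eq_le leNgt k_le0 /kappa (negbTE xy) subr0.
  exact: (proj1 Pi_stochastic).
by rewrite mulr0 !mul0r.
Qed.

Lemma dirichlet_by_parts f g :
  \sum_x q x * f x * Kop Pi g x = - dirichlet Pi q (grad f) (grad g).
Proof.
pose T := \sum_x \sum_y q x * kappa Pi x y * f x * (g y - g x).
have T_def : \sum_x q x * f x * Kop Pi g x = T.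
  apply: eq_bigr => x _; rewrite Kop_centered mulr_sumr.
  by apply: eq_bigr => y _; ring.
have T_swap : \sum_x \sum_y q x * kappa Pi x y * f y * (g y - g x) = - T.
  rewrite exchange_big -sumrN; apply: eq_bigr => x _.
  rewrite -sumrN; apply: eq_bigr => y _; rewrite detailed_balance; ring.
rewrite T_def dirichlet_full => [|x]; last by rewrite /grad subrr.
have -> : \sum_x \sum_y cw Pi q x y * grad f x y * grad g x y =
    2^-1 * (\sum_x \sum_y q x * kappa Pi x y * f y * (g y - g x) - T).
  rewrite /T -sumrB mulr_sumr; apply: eq_bigr => x _.
  rewrite -sumrB mulr_sumr; apply: eq_bigr => y _; rewrite /cw /grad; ring.
by rewrite T_swap; field.
Qed.

Lemma dirichlet_grad_Kop g1 g2 : Kop Pi g1 = Kop Pi g2 ->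
  dirichlet Pi q (grad g1) (grad g1) = dirichlet Pi q (grad g2) (grad g2).
Proof.
move=> K12.
have D11 : dirichlet Pi q (grad g1) (grad g1) = dirichlet Pi q (grad g1) (grad g2).
  by apply: oppr_inj; rewrite -!dirichlet_by_parts K12.
have D22 : dirichlet Pi q (grad g2) (grad g2) = dirichlet Pi q (grad g2) (grad g1).
  by apply: oppr_inj; rewrite -!dirichlet_by_parts K12.
by rewrite D11 D22 dirichletC.
Qed.

Lemma Hm1normE g f : Kop Pi g = f ->
  Hm1norm Pi q f = (Num.sqrt (dirichlet Pi q (grad g) (grad g)))%:E.
Proof.
move=> Kg; rewrite /Hm1norm; case: pselect => [ex|]; last by case; exists g.
by rewrite L2norm_dirichlet (@dirichlet_grad_Kop _ g) // (projT2 (cid ex)).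
Qed.

Lemma Var_sub (P1 P0 : S -> R) :
  Var q P1 - Var q P0 =
  2 * \sum_y q y * (P0 y / q y) * (P1 y / q y - P0 y / q y) +
  \sum_y q y * (P1 y / q y - P0 y / q y) * (P1 y / q y - P0 y / q y).
Proof.
rewrite /Var opprB addrA subrK mulr_sumr -big_split -sumrB /=.
by apply: eq_bigr => y _; ring.
Qed.

Hypothesis q_ge0 : forall y, 0 <= q y.

Lemma Var_sub_div_rho_ge (P1 P0 : S -> R) :
  -2 * Num.sqrt (dirichlet Pi q (grad (fun y => P0 y / q y))
                               (grad (fun y => P0 y / q y))) <=
  (Var q P1 - Var q P0) / fine (rho Pi q P1 P0).
Proof.
set l0 := fun y => P0 y / q y; set N0 := Num.sqrt _.
have N0_ge0 : 0 <= N0 := sqrtr_ge0 _.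
rewrite /rho; set d := fun y => _ - _.
have [[g Kg]|no_preimage] := pselect (exists g, Kop Pi g = d); last first.
  rewrite /Hm1norm; case: pselect => //= _; rewrite invr0 mulr0; lra.
rewrite (Hm1normE Kg) /= Var_sub; set r := Num.sqrt _.
have first_order : \sum_y q y * (P0 y / q y) * (P1 y / q y - P0 y / q y) =
    - dirichlet Pi q (grad l0) (grad g).
  by rewrite -dirichlet_by_parts Kg.
have second_order :
    0 <= \sum_y q y * (P1 y / q y - P0 y / q y) * (P1 y / q y - P0 y / q y).
  by apply: sumr_ge0 => y _; rewrite -mulrA mulr_ge0 // -expr2 sqr_ge0.
have CS : dirichlet Pi q (grad l0) (grad g) <= N0 * r.
  apply: le_trans (ler_norm _) _; exact: dirichlet_CauchySchwarz.
have [r0|r_gt0] := eqVneq r 0.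
  by rewrite r0 invr0 mulr0; lra.
have {}r_gt0 : 0 < r by rewrite lt0r r_gt0 sqrtr_ge0.
rewrite first_order ler_pdivlMr //; nra.
Qed.

End DetailedBalance.

Section RealFunctions.
Variable R : realType.
Implicit Types (f : R -> R) (a t x : R).

Lemma is_derive_continuous f x d : is_derive x 1 f d -> {for x, continuous f}.
Proof.
by move=> fd; apply/differentiable_continuous/derivable1_diffP; exact: ex_derive.
Qed.

Lemma cvg_shift_at_right f x : {for x, continuous f} ->
  f (x + h) @[h --> 0^'+] --> f x.
Proof.
move=> fx; have shift_cvg : x + h @[h --> 0^'+] --> x.
  apply: cvg_at_right_filter; rewrite -[X in _ --> X]addr0.
  by apply: cvgD; [exact: cvg_cst|exact: cvg_id].
exact: continuous_cvg fx shift_cvg.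
Qed.

Lemma is_derive_quotient_at_right f x d : is_derive x 1 f d ->
  h^-1 * (f (x + h) - f x) @[h --> 0^'+] --> d.
Proof.
move=> fd; have := ex_derive (is_derive := fd).
rewrite /derivable -(derive_val (is_derive := fd)) /derive.
move=> /cvg_dnbhs_at_right; apply: cvg_trans; apply: near_eq_cvg.
by near=> h; rewrite /= /shift /= [h%:A]mulr1 [h + x]addrC.
Unshelve. all: by end_near.
Qed.

Lemma is_derive_sumr (I : Type) (r : seq I) (F : I -> R -> R) (dF : I -> R) t :
  (forall i, is_derive t 1 (F i) (dF i)) ->
  is_derive t 1 (fun s => \sum_(i <- r) F i s) (\sum_(i <- r) dF i).
Proof.
move=> Fd; rewrite -fct_sumE.
by elim/big_ind2: _ => // [|? ? ? ? ? ?]; [exact: is_derive_cst|exact: is_deriveD].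
Qed.

Lemma ger0_derive_ndecr_oy f (f' : R -> R) a :
  (forall x, a < x -> is_derive x 1 f (f' x)) -> (forall x, a < x -> 0 <= f' x) ->
  {in `]a, +oo[ &, {homo f : x y / x <= y}}.
Proof.
move=> fd f'_ge0 x y; rewrite !in_itv /= !andbT => ax ay xy.
have a_lt z : z \in `]x, y[ -> a < z.
  by rewrite in_itv /= => /andP[xz _]; exact: lt_trans xz.
apply: (@ger0_derive1_ndecr R f x y) => //.
- by move=> z /a_lt /fd zd; exact: ex_derive.
- by move=> z /a_lt az; have zd := fd z az; rewrite derive1E derive_val f'_ge0.
- apply: continuous_in_subspaceT => z; rewrite inE /= in_itv /= => /andP[xz _].
  exact: is_derive_continuous (fd z (lt_le_trans ax xz)).
Qed.

Lemma derive0_cst_oy f a : (forall x, a < x -> is_derive x 1 f 0) ->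
  {in `]a, +oo[ &, forall x y, f x = f y}.
Proof.
move=> fd.
have f_ndecr := @ger0_derive_ndecr_oy f (fun=> 0) a fd (fun _ _ => lexx 0).
have Nf_ndecr : {in `]a, +oo[ &, {homo - f : x y / x <= y}}.
  apply: (@ger0_derive_ndecr_oy (- f) (fun=> 0) a) => // x ax.
  by rewrite /= -oppr0; apply: is_deriveN; exact: fd.
move=> x y ax ay; wlog xy : x y ax ay / x <= y.
  by move=> H; case: (leP x y) => [|/ltW] xy; [exact: H|exact/esym/H].
apply/eqP; rewrite eq_le f_ndecr //= -lerN2; exact: Nf_ndecr.
Qed.

Lemma ndecr_ge_cvg_at_right f a L : {in `]a, +oo[ &, {homo f : x y / x <= y}} ->
  f t @[t --> a^'+] --> L -> forall x, a < x -> L <= f x.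
Proof.
move=> f_ndecr fL x ax; rewrite leNgt; apply/negP => fxL.
near a^'+ => t.
have ftx : f x < f t by near: t; exact: (cvgr_gt L fL).
have at_ : a < t by near: t; exact: nbhs_right_gt.
have tx : t < x by near: t; exact: nbhs_right_lt.
have := f_ndecr t x; rewrite !in_itv /= !andbT => /(_ at_ ax (ltW tx)).
by rewrite leNgt ftx.
Unshelve. all: by end_near.
Qed.

Lemma derive0_cvg_at_right_eq f a L : (forall x, a < x -> is_derive x 1 f 0) ->
  f t @[t --> a^'+] --> L -> forall x, a < x -> f x = L.
Proof.
move=> fd fL x ax.
have f_cst : {near a^'+, cst (f x) =1 f}.
  near=> t; have at_ : a < t by near: t; exact: nbhs_right_gt.
  by apply: (derive0_cst_oy fd); rewrite in_itv /= andbT.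
have fx : f t @[t --> a^'+] --> f x.
  exact: cvg_trans (near_eq_cvg f_cst) (cvg_cst _).
by rewrite -(cvg_lim _ fx) // (cvg_lim _ fL).
Unshelve. all: by end_near.
Qed.

Lemma is_derive_expR_scale (C s : R) :
  is_derive s 1 (fun s => expR (- (C * s))) (expR (- (C * s)) * - C).
Proof.
have gd : is_derive s 1 (fun s => - (C * s)) (- C).
  have := is_deriveN (is_deriveZ C (is_derive_id s 1)).
  by rewrite /GRing.scale /= mulr1.
exact: is_derive1_comp (is_derive_expR _) gd.
Qed.

(* Gronwall: [expR (- C s) * N s] is nonincreasing and tends to [0] at [a]. *)
Lemma gronwall_eq0 (N N' : R -> R) (C a : R) :
  (forall x, a < x -> is_derive x 1 N (N' x)) ->
  (forall x, a < x -> N' x <= C * N x) ->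
  (forall x, a < x -> 0 <= N x) ->
  N t @[t --> a^'+] --> 0 -> forall x, a < x -> N x = 0.
Proof.
move=> Nd N'_le N_ge0 N0 x ax.
pose E s := expR (- (C * s)).
have EN_nincr : {in `]a, +oo[ &, {homo (fun s => - (E s * N s)) : u v / u <= v}}.
  apply: (@ger0_derive_ndecr_oy _ (fun s => E s * (C * N s - N' s))) => s ast.
    have := is_deriveN (is_deriveM (is_derive_expR_scale C s) (Nd s ast)).
    by rewrite /GRing.scale /=; congr is_derive; rewrite /E; ring.
  by rewrite mulr_ge0 ?expR_ge0 // subr_ge0 N'_le.
have EN0 : - (E t * N t) @[t --> a^'+] --> 0.
  rewrite -oppr0 -(mulr0 (E a)); apply: cvgN; apply: cvgM N0.
  apply: cvg_at_right_filter; exact: is_derive_continuous (is_derive_expR_scale C a).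
have := ndecr_ge_cvg_at_right EN_nincr EN0 ax.
rewrite oppr_ge0 pmulr_rle0 ?expR_gt0 // => Nx_le0.
by apply/eqP; rewrite eq_le Nx_le0 N_ge0.
Qed.

Lemma is_derive_sqr_min0 (x : R) :
  is_derive x 1 (fun y => Num.min y 0 ^+ 2) (2 * Num.min x 0).
Proof.
set g := fun y : R => Num.min y 0 ^+ 2.
have remainder h : `|g (h + x) - g x - 2 * Num.min x 0 * h| <= h ^+ 2.
  rewrite /g !minElt; case: ltP => ?; case: ltP => ?;
    rewrite ler_norml; apply/andP; split; nra.
have quotient : h^-1 *: ((g \o shift x) (h *: 1) - g x) @[h --> 0^'] -->
    2 * Num.min x 0.
  apply/cvgrPdist_le => e e_gt0; near=> h.
  have h_neq0 : h != 0 by near: h; exact: nbhs_dnbhs_neq.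
  have h_le : `|h| <= e by near: h; exact: dnbhs0_le.
  rewrite /= /shift /= [h%:A]mulr1.
  have -> : 2 * Num.min x 0 - h^-1 * (g (h + x) - g x) =
      - (h^-1 * (g (h + x) - g x - 2 * Num.min x 0 * h)) by field.
  rewrite normrN normrM normrV ?unitfE // ler_pdivrMl ?normr_gt0 //.
  apply: le_trans (remainder h) _.
  by rewrite -[h ^+ 2]real_normK ?num_real // expr2 ler_wpM2l.
have gd : derivable g x 1 by exact: cvgP quotient.
by constructor => //; rewrite /derive (cvg_lim _ quotient).
Unshelve. all: by end_near.
Qed.

Lemma min0_mul_le (a b c : R) : 0 <= c <= 1 ->
  2 * Num.min a 0 * b * c <= Num.min a 0 ^+ 2 + Num.min b 0 ^+ 2.
Proof.
move=> /andP[c_ge0 c_le1]; rewrite !minElt.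
have c1_ge0 : 0 <= 1 - c by rewrite subr_ge0.
case: ltP => a0; case: ltP => b0.
- have ab_ge0 : 0 <= a * b by nra.
  have := sqr_ge0 (a - b); have := mulr_ge0 ab_ge0 c1_ge0; nra.
- have ab_le0 : a * b <= 0 by nra.
  have := mulr_le0_ge0 ab_le0 c_ge0; nra.
- nra.
- nra.
Qed.

Lemma is_derive_parameterized_integral f a x :
  (forall y, a <= y -> {for y, continuous f}) -> a < x ->
  is_derive x 1 (fun y => parameterized_integral lebesgue_measure a y f) (f x).
Proof.
move=> f_cont ax.
have f_int : lebesgue_measure.-integrable `[a, x + 1] (EFin \o f).
  apply: continuous_compact_integrable; first exact: segment_compact.
  apply: continuous_in_subspaceT => y; rewrite inE /= in_itv /= => /andP[ay _].
  exact: f_cont.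
have x_lt : x < x + 1 by rewrite ltrDl.
have [fd f'x] := continuous_FTC1_closed x_lt f_int ax (f_cont x (ltW ax)).
by have := derivableP fd; rewrite -derive1E f'x.
Qed.

End RealFunctions.

Section ForwardEquation.
Variables (R : realType) (S : finType) (Pi : S -> S -> R) (p : R -> S -> R).
Implicit Types s t : R.
Hypothesis Pi_stochastic : stochastic Pi.
Hypothesis p_cvg0 : forall y, p t y @[t --> 0^'+] --> p 0 y.
Hypothesis p_deriv : forall t : R, 0 < t -> forall y,
  is_derive t 1 (fun s => p s y) (\sum_z p t z * kappa Pi z y).

Lemma stochastic_le1 x y : Pi x y <= 1.
Proof.
rewrite -(proj2 Pi_stochastic x) (bigD1 y) //= lerDl.
by apply: sumr_ge0 => z _; exact: (proj1 Pi_stochastic).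
Qed.

Lemma sum_mul_kappa (f : S -> R) y :
  \sum_z f z * kappa Pi z y = \sum_z f z * Pi z y - f y.
Proof.
rewrite /kappa (eq_bigr (fun z => f z * Pi z y - f z * (z == y)%:R)) => [|z _].
  rewrite sumrB; congr (_ - _); rewrite (bigD1 y) //= eqxx mulr1 big1 ?addr0 //.
  by move=> z /negbTE ->; rewrite mulr0.
by rewrite mulrBr.
Qed.

Lemma is_derive_pairing (c : S -> R) (t : R) : 0 < t ->
  is_derive t 1 (fun s => \sum_z p s z * c z) (\sum_z p t z * Kop Pi c z).
Proof.
move=> t_gt0.
have -> : \sum_z p t z * Kop Pi c z = \sum_z (\sum_w p t w * kappa Pi w z) * c z.
  rewrite /Kop (eq_bigr (fun z => \sum_w p t z * (kappa Pi z w * c w))).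
    rewrite exchange_big /=; apply: eq_bigr => z _; rewrite mulr_suml.
    by apply: eq_bigr => w _; ring.
  by move=> z _; rewrite mulr_sumr.
apply: is_derive_sumr => z; rewrite [X in is_derive _ _ _ X]mulrC.
have -> : (fun s => p s z * c z) = c z \*: (fun s => p s z).
  by apply/funext => s; rewrite /= mulrC.
exact: is_deriveZ (p_deriv t_gt0 z).
Qed.

Lemma forward_mass (t : R) : 0 < t -> \sum_y p t y = \sum_y p 0 y.
Proof.
move=> t_gt0; have mass_d (s : R) : 0 < s -> is_derive s 1 (fun s => \sum_y p s y) 0.
  move=> s_gt0; have := is_derive_pairing (fun=> 1) s_gt0.
  have K1 : Kop Pi (fun=> 1) = fun=> 0.
    apply/funext => x; rewrite /Kop (eq_bigr (kappa Pi x)) ?kappa_row_sum //.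
    by move=> y _; rewrite mulr1.
  rewrite K1 big1 => [|y _]; last by rewrite mulr0.
  by under eq_fun do under eq_bigr do rewrite mulr1.
apply: derive0_cvg_at_right_eq mass_d _ _ t_gt0.
by apply: cvg_big => [|y _]; [exact: add_continuous|exact: p_cvg0].
Qed.

Definition negative_energy (t : R) := \sum_y Num.min (p t y) 0 ^+ 2.

Lemma is_derive_negative_energy (t : R) : 0 < t ->
  is_derive t 1 negative_energy
    (\sum_y 2 * Num.min (p t y) 0 * (\sum_z p t z * kappa Pi z y)).
Proof.
move=> t_gt0; apply: is_derive_sumr => y.
exact: is_derive1_comp (is_derive_sqr_min0 _) (p_deriv t_gt0 y).
Qed.

Lemma negative_energy_derive_le (t : R) :
  \sum_y 2 * Num.min (p t y) 0 * (\sum_z p t z * kappa Pi z y) <=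
  (2 * #|S|%:R) * negative_energy t.
Proof.
set n := fun y => Num.min (p t y) 0.
have term_le y : 2 * n y * (\sum_z p t z * kappa Pi z y) <=
    \sum_z (n y ^+ 2 + n z ^+ 2).
  rewrite sum_mul_kappa mulrBr mulr_sumr.
  have ny_py : 0 <= 2 * n y * p t y.
    by rewrite /n minElt; case: ltP => ?; nra.
  suff : \sum_z 2 * n y * (p t z * Pi z y) <= \sum_z (n y ^+ 2 + n z ^+ 2) by lra.
  apply: ler_sum => z _; rewrite mulrA min0_mul_le //.
  by rewrite (proj1 Pi_stochastic) stochastic_le1.
apply: le_trans (ler_sum _ (fun y _ => term_le y)) _.
have -> : \sum_y \sum_z (n y ^+ 2 + n z ^+ 2) =
    \sum_(y : S) \sum_z n z ^+ 2 + \sum_(y : S) \sum_z n z ^+ 2.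
  rewrite [X in _ = X + _]exchange_big -big_split; apply: eq_bigr => y _.
  by rewrite -big_split.
rewrite sumr_const -mulr_natr /negative_energy.
change #|xpredT| with #|S|; lra.
Qed.

Lemma forward_ge0 : (forall y, 0 <= p 0 y) ->
  forall t : R, 0 < t -> forall y, 0 <= p t y.
Proof.
move=> p0_ge0 t t_gt0 y.
have energy0 : negative_energy t = 0.
  apply: (gronwall_eq0 (@is_derive_negative_energy)
    (fun s _ => negative_energy_derive_le s)) => //.
    by move=> s _; apply: sumr_ge0 => z _; exact: sqr_ge0.
  suff : negative_energy s @[s --> 0^'+] --> \sum_z Num.min (p 0 z) 0 ^+ 2.
    by rewrite big1 // => z _; rewrite (min_r (p0_ge0 z)) expr0n.
  apply: cvg_big => [|z _]; first exact: add_continuous.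
  exact: continuous_cvg (is_derive_continuous (is_derive_sqr_min0 _)) (@p_cvg0 z).
have := psumr_eq0P (fun z _ => sqr_ge0 (Num.min (p t z) 0)) energy0.
move=> /(_ y isT) /eqP.
by rewrite sqrf_eq0 minElt; case: ltP => // ? /eqP ?; lra.
Qed.

Lemma forward_gt0 y : (forall z, 0 <= p 0 z) -> 0 < p 0 y ->
  forall t : R, 0 < t -> 0 < p t y.
Proof.
move=> p0_ge0 p0y_gt0 t t_gt0.
pose f s := expR s * p s y.
have fd s : 0 < s -> is_derive s 1 f (expR s * \sum_z p s z * Pi z y).
  move=> s_gt0; have := is_deriveM (is_derive_expR s) (p_deriv s_gt0 y).
  by rewrite /GRing.scale /= sum_mul_kappa; congr is_derive; ring.
have f'_ge0 s : 0 < s -> 0 <= expR s * \sum_z p s z * Pi z y.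
  move=> s_gt0; rewrite mulr_ge0 ?expR_ge0 //; apply: sumr_ge0 => z _.
  by rewrite mulr_ge0 ?(proj1 Pi_stochastic) ?forward_ge0.
have f_ndecr := ger0_derive_ndecr_oy fd f'_ge0.
have f0 : f s @[s --> 0^'+] --> expR 0 * p 0 y.
  apply: cvgM (@p_cvg0 y); apply: cvg_at_right_filter; exact: continuous_expR.
have := ndecr_ge_cvg_at_right f_ndecr f0 t_gt0.
rewrite expR0 mul1r /f => /(lt_le_trans p0y_gt0).
by rewrite pmulr_rgt0 ?expR_gt0.
Qed.

Lemma iter_derive1_pairing (c : S -> R) n (t : R) : 0 < t ->
  iter n (@derive1 R R) (fun s => \sum_z p s z * c z) t =
  \sum_z p t z * iter n (Kop Pi) c z.
Proof.
elim: n t => [//|n IHn] t t_gt0 /=.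
have near_t : \near t, iter n (@derive1 R R) (fun s => \sum_z p s z * c z) t =
    \sum_z p t z * iter n (Kop Pi) c z.
  by near=> s; apply: IHn; near: s; exact: lt_nbhsr.
rewrite derive1E (near_eq_derive _ near_t).
have pd := is_derive_pairing (iter n (Kop Pi) c) t_gt0; exact: derive_val.
Unshelve. all: by end_near.
Qed.

Lemma forward_smooth (t0 : R) : 0 < t0 -> smooth_curve t0 p.
Proof.
move=> t0_gt0; exists t0 => // y n t; rewrite subrr => t_gt0.
pose c z : R := (z == y)%:R.
have -> : (fun s => p s y) = (fun s => \sum_z p s z * c z).
  apply/funext => s; rewrite (bigD1 y) //= /c eqxx mulr1 big1 ?addr0 // => z.
  by move=> /negbTE ->; rewrite mulr0.
have near_t : \near t, (fun s => \sum_z p s z * iter n (Kop Pi) c z) t =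
    iter n (@derive1 R R) (fun s => \sum_z p s z * c z) t.
  by near=> s; rewrite iter_derive1_pairing //; near: s; exact: lt_nbhsr.
have pd := near_eq_is_derive near_t (is_derive_pairing _ t_gt0); exact: ex_derive.
Unshelve. all: by end_near.
Qed.

End ForwardEquation.

Section Stationary.
Variables (R : realType) (S : finType) (Pi : S -> S -> R) (q : S -> R).
Hypothesis Pi_stochastic : stochastic Pi.
Hypothesis q_ge0 : forall y, 0 <= q y.
Hypothesis q_stationary : forall y, \sum_x q x * Pi x y = q y.

Lemma mpow_ge0 n x y : 0 <= mpow Pi n x y.
Proof.
elim: n x y => [|n IHn] x y /=; first exact: ler0n.
by apply: sumr_ge0 => z _; rewrite mulr_ge0 // (proj1 Pi_stochastic).
Qed.

Lemma stationary_eq0_mpow n x y : q y = 0 -> 0 < mpow Pi n x y -> q x = 0.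
Proof.
elim: n y => [|n IHn] y qy0 /=; first by case: eqVneq => [->|]; rewrite ?ltxx.
move=> /lt0r_neq0/eqP path_pos.
have [z /andP[_ step_pos]] := psumr_neq0P (fun z _ =>
  mulr_ge0 (mpow_ge0 n x z) (proj1 Pi_stochastic z y)) path_pos.
have Pi_zy_gt0 : 0 < Pi z y.
  rewrite lt0r (proj1 Pi_stochastic) andbT.
  by apply: contraTneq step_pos => ->; rewrite mulr0 ltxx.
apply: (IHn z).
  have := psumr_eq0P (fun x _ => mulr_ge0 (q_ge0 x) (proj1 Pi_stochastic x y))
    (etrans (q_stationary y) qy0) (i := z) isT.
  by move=> /eqP; rewrite mulf_eq0 (gt_eqF Pi_zy_gt0) orbF => /eqP.
rewrite lt0r mpow_ge0 andbT.
by apply: contraTneq step_pos => ->; rewrite mul0r ltxx.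
Qed.

Hypothesis Pi_irreducible : irreducible Pi.
Hypothesis q_sum1 : \sum_y q y = 1.

Lemma stationary_gt0 y : 0 < q y.
Proof.
rewrite lt0r q_ge0 andbT; apply/eqP => qy0.
have q0 x : q x = 0 by have [n] := Pi_irreducible x y; exact: stationary_eq0_mpow.
by move: q_sum1; rewrite big1 // => /esym/eqP; rewrite oner_eq0.
Qed.
End Stationary.

Lemma is_derive_density (R : realType) (S : finType) (Pi : S -> S -> R)
    (q : S -> R) (p : R -> S -> R) (t : R) :
  (forall y, 0 < q y) ->
  (forall y z, q y * kappa Pi y z = q z * kappa Pi z y) ->
  (forall y, is_derive t 1 (fun s => p s y) (\sum_z p t z * kappa Pi z y)) ->
  forall y, is_derive t 1 (fun s => p s y / q y) (Kop Pi (fun z => p t z / q z) y).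
Proof.
move=> q_gt0 detailed_balance p_deriv y.
have -> : Kop Pi (fun z => p t z / q z) y = (q y)^-1 * \sum_z p t z * kappa Pi z y.
  rewrite mulr_sumr; apply: eq_bigr => z _.
  apply: (@mulfI _ (q y * q z)); first by rewrite mulf_neq0 ?gt_eqF.
  have -> : q y * q z * (kappa Pi y z * (p t z / q z)) = q y * kappa Pi y z * p t z.
    by field; rewrite gt_eqF.
  have -> : q y * q z * ((q y)^-1 * (p t z * kappa Pi z y)) = q z * kappa Pi z y * p t z.
    by field; rewrite gt_eqF.
  by rewrite detailed_balance.
have -> : (fun s => p s y / q y) = (q y)^-1 \*: (fun s => p s y).
  by apply/funext => s; rewrite /= mulrC.
exact: is_deriveZ.
Qed.

Section DescentAlongCurve.
Variables (R : realType) (S : finType) (Pi : S -> S -> R) (q : S -> R).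
Variables (p G : R -> S -> R) (a t0 : R).
Hypothesis Pi_stochastic : stochastic Pi.
Hypothesis q_ge0 : forall y, 0 <= q y.
Hypothesis detailed_balance : forall y z, q y * kappa Pi y z = q z * kappa Pi z y.
Hypothesis a_lt_t0 : a < t0.

Local Notation ell t := (fun y => p t y / q y).

Hypothesis ell_deriv : forall t, a < t -> forall y,
  is_derive t 1 (fun s => p s y / q y) (Kop Pi (ell t) y).
Hypothesis G_deriv : forall t, a < t -> forall y,
  is_derive t 1 (fun s => G s y) (p t y / q y).

Let g h := fun z => G (t0 + h) z - G t0 z.
Let d h := fun z => p (t0 + h) z / q z - p t0 z / q z.

Lemma Kop_increment h : 0 < h -> Kop Pi (g h) = d h.
Proof.
move=> h_gt0; apply/funext => w.
have t0h : a < t0 + h by rewrite (lt_trans a_lt_t0) // ltrDl.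
have cst_w : {in `]a, +oo[ &, forall x y,
    Kop Pi (G x) w - p x w / q w = Kop Pi (G y) w - p y w / q w}.
  apply: derive0_cst_oy => s a_s; rewrite -(subrr (Kop Pi (ell s) w)).
  apply: is_deriveB (ell_deriv a_s w); apply: is_derive_sumr => z.
  exact: (is_deriveZ (kappa Pi w z) (G_deriv a_s z)).
have := cst_w (t0 + h) t0; rewrite !in_itv /= !andbT => /(_ t0h a_lt_t0).
by rewrite /g /d KopB; lra.
Qed.

Local Notation D := (dirichlet Pi q).
Let N0 := Num.sqrt (D (grad (ell t0)) (grad (ell t0))).

Lemma dquot_split h : 0 < h ->
  dquot (Var q) (rho Pi q) t0 p h =
  ((- 2 * D (grad (ell t0)) (grad (g h)) - D (grad (d h)) (grad (g h))) /
   Num.sqrt (D (grad (g h)) (grad (g h))))%:E.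
Proof.
move=> h_gt0; have Kg := Kop_increment h_gt0.
have first_order : \sum_y q y * (p t0 y / q y) * d h y =
    - D (grad (ell t0)) (grad (g h)).
  by rewrite -dirichlet_by_parts // Kg.
have second_order : \sum_y q y * d h y * d h y = - D (grad (d h)) (grad (g h)).
  by rewrite -dirichlet_by_parts // Kg.
rewrite /dquot /rho (Hm1normE Pi_stochastic detailed_balance Kg) Var_sub.
by rewrite first_order second_order /=; congr ((_ / _)%:E); ring.
Qed.

Lemma dquot_cvg : dquot (Var q) (rho Pi q) t0 p h @[h --> 0^'+] --> (- 2 * N0)%:E.
Proof.
pose v h := fun z => h^-1 * g h z.
pose X h := D (grad (ell t0)) (grad (v h)) / Num.sqrt (D (grad (v h)) (grad (v h))).
pose Y h := D (grad (d h)) (grad (g h)) / Num.sqrt (D (grad (g h)) (grad (g h))).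
have split_near : {near 0^'+, (fun h => (- 2 * X h - Y h)%:E) =1
    dquot (Var q) (rho Pi q) t0 p}.
  near=> h; have h_gt0 : 0 < h by near: h; exact: nbhs_right_gt.
  have grad_v : grad (v h) = fun x y => h^-1 * grad (g h) x y.
    by apply/funext => x; apply/funext => y; rewrite /grad /v -mulrBr.
  rewrite dquot_split // /X /Y grad_v dirichletZr dirichletZl dirichletZr mulrA.
  rewrite -expr2 sqrtrM ?sqr_ge0 // sqrtr_sqr gtr0_norm ?invr_gt0 //.
  rewrite invfM mulrACA mulfV ?invr_neq0 ?gt_eqF // mul1r.
  by congr (_%:E); ring.
apply: cvg_trans (near_eq_cvg split_near) _.
apply: cvg_EFin; first exact: nearW.
rewrite -[X in _ --> X]subr0; apply: cvgB.
  apply: cvgM; first exact: cvg_cst.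
  apply: dirichlet_ratio_cvg => // x y; apply: cvgB;
    exact: is_derive_quotient_at_right (G_deriv a_lt_t0 _).
have d_cvg z : d h z @[h --> 0^'+] --> 0.
  suff : d h z @[h --> 0^'+] --> p t0 z / q z - p t0 z / q z by rewrite subrr.
  apply: cvgB; last exact: cvg_cst.
  apply: (@cvg_shift_at_right _ (fun s => p s z / q z)).
  exact: is_derive_continuous (ell_deriv a_lt_t0 z).
have grad_d_cvg : Num.sqrt (D (grad (d h)) (grad (d h))) @[h --> 0^'+] --> 0.
  have grad_d0 x y : grad (d h) x y @[h --> 0^'+] --> 0.
    by rewrite -[X in _ --> X]subr0; apply: cvgB.
  have : D (grad (d h)) (grad (d h)) @[h --> 0^'+] --> D (fun _ _ => 0) (fun _ _ => 0).
    exact: dirichlet_cvg.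
  rewrite dirichlet0l => /(continuous_cvg _ (@sqrt_continuous R 0)).
  by rewrite sqrtr0.
apply: (squeeze_cvgr (f := fun h => - Num.sqrt (D (grad (d h)) (grad (d h))))
  (h := fun h => Num.sqrt (D (grad (d h)) (grad (d h))))); last exact: grad_d_cvg.
- by apply: nearW => h; rewrite -ler_norml dirichlet_ratio_le.
- by have := cvgN grad_d_cvg; rewrite oppr0; apply.
Unshelve. all: by end_near.
Qed.

End DescentAlongCurve.

Theorem theorem6p3 (R : realType) (S : finType) (Pi : S -> S -> R)
    (q : S -> R) (p : R -> S -> R) :
  stochastic Pi -> irreducible Pi ->
  (forall y, 0 <= q y) -> \sum_y q y = 1 ->
  (forall y, \sum_x q x * Pi x y = q y) ->
  (forall y z, q y * kappa Pi y z = q z * kappa Pi z y) ->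
  inM (p 0) ->
  (forall y : S, p t y @[t --> (0 : R)^'+] --> p 0 y) ->
  (forall t : R, 0 < t -> forall y : S,
      is_derive t 1 (fun s => p s y) (\sum_z p t z * kappa Pi z y)) ->
  forall t0 : R, 0 < t0 ->
    steepest_descent (Var q) (rho Pi q) t0 p.
Proof.
move=> Pi_st Pi_irr q_ge0 q_sum1 q_stat balance [p0_gt0 p0_sum1] p_cvg0 p_deriv t0 t0_gt0.
have q_gt0 := stationary_gt0 Pi_st q_ge0 q_stat Pi_irr q_sum1.
have ell_deriv (t : R) : 0 < t -> forall y,
    is_derive t 1 (fun s => p s y / q y) (Kop Pi (fun z => p t z / q z) y).
  by move=> t_gt0; apply: is_derive_density => // y; exact: p_deriv.
have a_gt0 : 0 < t0 / 2 by rewrite divr_gt0.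
have a_lt_t0 : t0 / 2 < t0 by rewrite ltr_pdivrMr // ltr_pMr // ltr1n.
pose G (t : R) y :=
  parameterized_integral lebesgue_measure (t0 / 2) t (fun s => p s y / q y).
have G_deriv (t : R) : t0 / 2 < t -> forall y, is_derive t 1 (G^~ y) (p t y / q y).
  move=> a_t y; apply: is_derive_parameterized_integral => // s a_s.
  exact: is_derive_continuous (ell_deriv s (lt_le_trans a_gt0 a_s) y).
have p0_ge0 y := ltW (p0_gt0 y).
split.
  move=> t /(lt_le_trans t0_gt0) t_gt0; split; first by move=> y; exact: forward_gt0.
  by rewrite forward_mass.
split; first exact: forward_smooth.
eexists; split.
  apply: (dquot_cvg Pi_st q_ge0 balance a_lt_t0 _ G_deriv) => t /(lt_trans a_gt0).
  exact: ell_deriv.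
move=> P _ _ Pt0 l Pl; apply: (cvge_to_ge Pl); apply: nearW => h.
by rewrite lee_fin -Pt0; exact: Var_sub_div_rho_ge.
Qed.
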